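(* Suppose that $(R,\mathfrak m)$ is $F$-pure and let $(\mathfrak a_\lambda)_{\lambda\in\Lambda}$ be a non-empty family of fully $\Phi(E)$-special ideals of $R$. Then $\sum_{\lambda\in\Lambda}\mathfrak a_\lambda$ is fully $\Phi(E)$-special.
   Context: $(R,\mathfrak m)$ is a commutative Noetherian local ring of prime characteristic $p$. $R$ is $F$-pure if for every $R$-module $M$ the map $M\to R^{(1)}\otimes_RM$, $m\mapsto1\otimes m$, is injective ($R^{(1)}$ = $R$ with right structure via $r\mapsto r^p$). The Frobenius skew polynomial ring $R[x,f]$ consists of polynomials $\sum r_ix^i$, free left $R$-module on $(x^i)_{i\ge0}$, with $xr=r^px$. $E=E_R(R/\mathfrak m)$; $\Phi(E)=R[x,f]\otimes_RE=\bigoplus_nRx^n\otimes_RE$, with $0$th component identified with $E$. $\operatorname{ann}_{\Phi(E)}(\mathfrak aR[x,f])$ is the submodule of elements annihilated by all $rx^n$, $r\in\mathfrak a$, $n\ge0$; $\mathfrak a$ is fully $\Phi(E)$-special if $(0:_E\mathfrak a)$ is contained in the $0$th component of $\operatorname{ann}_{\Phi(E)}(\mathfrak aR[x,f])$. *)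

From HB Require Import structures.
From mathcomp Require Import all_boot all_order all_algebra.
Set Implicit Arguments. Unset Strict Implicit. Unset Printing Implicit Defensive.
Import Order.TTheory GRing.Theory.
Local Open Scope ring_scope.

Section Defs.
Variable R : comNzRingType.

Definition is_ideal (I : R -> Prop) : Prop :=
  [/\ I 0, (forall x y, I x -> I y -> I (x + y)) & (forall r x, I x -> I (r * x))].

Definition noetherian : Prop :=
  forall I : nat -> R -> Prop, (forall n, is_ideal (I n)) ->
    (forall n x, I n x -> I n.+1 x) ->
    exists N, forall n x, (N <= n)%N -> I n x -> I N x.

Definition local_with_max (m : R -> Prop) : Prop :=
  [/\ is_ideal m, ~ m 1 &
      forall I, is_ideal I -> ~ I 1 -> forall x, I x -> m x].

Inductive ideal_sum (L : Type) (a : L -> R -> Prop) : R -> Prop :=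
| isum0 : ideal_sum a 0
| isum_gen l x : a l x -> ideal_sum a x
| isum_add x y : ideal_sum a x -> ideal_sum a y -> ideal_sum a (x + y)
| isum_mul r x : ideal_sum a x -> ideal_sum a (r * x).

(* Free left R-module on the set M: functions M -> R (finitely supported
   elements arise from the generators below). delta m is the basis vector. *)
Definition delta (M : lmodType R) (m : M) : M -> R := fun x => (x == m)%:R.

(* The relation submodule K such that
     R x^n (x)_R M  =  (free left R-module on M) / K,
   where R x^n is the (R,R)-bimodule R with right action s |-> s^(p^n).
   The class of r * delta m corresponds to r x^n (x) m. *)
Inductive frob_rel (p n : nat) (M : lmodType R) : (M -> R) -> Prop :=
| frob0 : frob_rel p n (fun _ => 0)
| frob_add f g : frob_rel p n f -> frob_rel p n g ->
    frob_rel p n (fun x => f x + g x)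
| frob_scale r f : frob_rel p n f -> frob_rel p n (fun x => r * f x)
| frob_ext f g : (forall x, f x = g x) -> frob_rel p n f -> frob_rel p n g
| frob_addrel m m' : frob_rel p n
    (fun x => delta (m + m') x - delta m x - delta m' x)
| frob_scalerel s m : frob_rel p n
    (fun x => delta (s *: m) x - s ^+ (p ^ n) * delta m x).

(* Equality of r x^n (x) m and r' x^n (x) m' in R x^n (x)_R M. *)
Definition frob_tensor_eq (p n : nat) (M : lmodType R) (r : R) (m : M)
  (r' : R) (m' : M) : Prop :=
  frob_rel p n (fun x => r * delta m x - r' * delta m' x).

Definition F_pure (p : nat) : Prop :=
  forall (M : lmodType R) (m m' : M), @frob_tensor_eq p 1 M 1 m 1 m' -> m = m'.

Definition injective_module (E : lmodType R) : Prop :=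
  forall (N M : lmodType R) (i : {linear N -> M}), injective i ->
  forall f : {linear N -> E}, exists g : {linear M -> E}, forall x, g (i x) = f x.

Definition is_submodule (E : lmodType R) (N : E -> Prop) : Prop :=
  [/\ N 0, (forall x y, N x -> N y -> N (x + y)) & (forall r x, N x -> N (r *: x))].

(* E is an injective hull of R/m, with R/m embedded as R e0 (ann e0 = m). *)
Definition injective_hull_residue (m : R -> Prop) (E : lmodType R) (e0 : E) : Prop :=
  [/\ forall r, r *: e0 = 0 <-> m r,
      (forall N, is_submodule N -> (exists e, N e /\ e <> 0) ->
         exists e, [/\ N e, e <> 0 & exists s, e = s *: e0])
    & injective_module E].

Definition annihilated_by (E : lmodType R) (a : R -> Prop) (e : E) : Prop :=
  forall r, a r -> r *: e = 0.

(* a is fully Phi(E)-special: every e in (0 :_E a), viewed in degree 0 of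
   Phi(E) = (+)_n R x^n (x) E, is killed by every r x^n with r in a,
   i.e. r x^n (x) e = 0 in R x^n (x)_R E for all n. *)
Definition fully_special (p : nat) (E : lmodType R) (a : R -> Prop) : Prop :=
  forall e : E, annihilated_by a e ->
  forall (n : nat) (r : R), a r -> @frob_tensor_eq p n E r e 0 0.

End Defs.
Arguments frob_tensor_eq {R} p n M r m r' m'.

From HB Require Import structures.
From mathcomp Require Import all_boot all_order all_algebra.
Import GRing.Theory.
Local Open Scope ring_scope.

(* The elements [r] with [r x^n (x) e = 0] form an ideal, and an element killed
   by the sum of the [a l] is killed by each [a l]; so this ideal contains every
   [a l], hence their sum. *)

Section IdealSum.
Variable R : comNzRingType.

Lemma ideal_sum_min (L : Type) (a : L -> R -> Prop) (I : R -> Prop) :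
  is_ideal I -> (forall l x, a l x -> I x) -> forall x, ideal_sum a x -> I x.
Proof.
case=> I0 ID IM aI x; elim=> [|l y /aI|y z _ Iy _ Iz|s y _ Iy] //.
- exact: ID.
- exact: IM.
Qed.

Lemma annihilated_by_sub (E : lmodType R) (a b : R -> Prop) (e : E) :
  (forall r, b r -> a r) -> annihilated_by a e -> annihilated_by b e.
Proof. by move=> ba ae r /ba; apply: ae. Qed.

Lemma frob_tensor_eq0_ideal (p n : nat) (M : lmodType R) (e : M) :
  is_ideal (fun r => frob_tensor_eq p n M r e 0 0).
Proof.
rewrite /frob_tensor_eq; split=> [|x y Hx Hy|s x Hx].
- by apply: (frob_ext _ (frob0 _ _ _)) => z; rewrite !mul0r subr0.
- by apply: (frob_ext _ (frob_add Hx Hy)) => z; rewrite !mul0r !subr0 mulrDl.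
- by apply: (frob_ext _ (frob_scale s Hx)) => z; rewrite !mul0r !subr0 mulrA.
Qed.

Lemma fully_special_ideal_sum (p : nat) (E : lmodType R) (L : Type)
    (a : L -> R -> Prop) :
  (forall l, fully_special p E (a l)) -> fully_special p E (ideal_sum a).
Proof.
move=> a_special e e_ann n; apply: ideal_sum_min => [|l r ar].
  exact: frob_tensor_eq0_ideal.
apply: (a_special l) ar.
exact: annihilated_by_sub (@isum_gen _ _ a l) e_ann.
Qed.

End IdealSum.

Theorem proposition1p9 (R : comNzRingType) (p : nat) (m : R -> Prop)
  (E : lmodType R) (e0 : E) (L : Type) (a : L -> R -> Prop) :
  p \in [pchar R] ->
  noetherian R ->
  local_with_max m ->
  injective_hull_residue m e0 ->
  F_pure R p ->
  inhabited L ->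
  (forall l, is_ideal (a l)) ->
  (forall l, fully_special p E (a l)) ->
  fully_special p E (ideal_sum a).
Proof. by move=> _ _ _ _ _ _ _; apply: fully_special_ideal_sum. Qed.
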